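(* Let $\mathbf{C}_1$ and $\mathbf{C}_2$ be categories such that $\hom_{\mathbf{C}_i}(\mathcal{A},\mathcal{B})$ is finite for each $i\in\{1,2\}$ and all objects $\mathcal{A},\mathcal{B}$ of $\mathbf{C}_i$. If $\mathbf{C}_1$ and $\mathbf{C}_2$ both have the Ramsey property for objects, then $\mathbf{C}_1\times\mathbf{C}_2$ has the Ramsey property for objects; and if $\mathbf{C}_1$ and $\mathbf{C}_2$ both have the Ramsey property for morphisms, then $\mathbf{C}_1\times\mathbf{C}_2$ has the Ramsey property for morphisms.
   Context: $\mathbf{C}_1\times\mathbf{C}_2$ is the product category: objects are pairs $(\mathcal{A}_1,\mathcal{A}_2)$ of objects, morphisms are pairs $(f_1,f_2)$ with $f_i$ a morphism of $\mathbf{C}_i$, composed componentwise. For objects $\mathcal{A},\mathcal{B}$ of a category, $\hom(\mathcal{A},\mathcal{B})$ is the set of morphisms $\mathcal{A}\to\mathcal{B}$; write $\mathcal{A}\to\mathcal{B}$ if it is nonempty. $\mathrm{Aut}(\mathcal{A})$ is the set of invertible morphisms $\mathcal{A}\to\mathcal{A}$. On $\hom(\mathcal{A},\mathcal{B})$ let $f\sim_\mathcal{A} f'$ iff $f'=f\cdot\alpha$ for some $\alpha\in\mathrm{Aut}(\mathcal{A})$, and $\binom{\mathcal{B}}{\mathcal{A}}=\hom(\mathcal{A},\mathcal{B})/\sim_\mathcal{A}$; for $w:\mathcal{B}\to\mathcal{C}$ set $w\cdot(f/\sim_\mathcal{A})=(w\cdot f)/\sim_\mathcal{A}$. A $k$-coloring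 of a set is a decomposition into $k$ pairwise disjoint sets $\mathcal{M}_1,\dots,\mathcal{M}_k$. For $k\ge2$, $\mathcal{C}\longrightarrow(\mathcal{B})^{\mathcal{A}}_k$ means $\mathcal{A}\to\mathcal{B}\to\mathcal{C}$ and for every $k$-coloring of $\binom{\mathcal{C}}{\mathcal{A}}$ there are $i$ and $w:\mathcal{B}\to\mathcal{C}$ with $w\cdot\binom{\mathcal{B}}{\mathcal{A}}\subseteq\mathcal{M}_i$; $\mathcal{C}\overset{hom}{\longrightarrow}(\mathcal{B})^{\mathcal{A}}_k$ is defined likewise with $\hom(\mathcal{A},\mathcal{C})$ and $w\cdot\hom(\mathcal{A},\mathcal{B})$. A category has the Ramsey property for objects (resp. morphisms) if for every $k\ge2$ and all objects $\mathcal{A}\to\mathcal{B}$ there is an object $\mathcal{C}$ with $\mathcal{C}\longrightarrow(\mathcal{B})^{\mathcal{A}}_k$ (resp. $\mathcal{C}\overset{hom}{\longrightarrow}(\mathcal{B})^{\mathcal{A}}_k$). *)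

From Stdlib Require List.
From mathcomp Require Import all_boot.
Set Implicit Arguments. Unset Strict Implicit. Unset Printing Implicit Defensive.

(* A (locally small) category: objects, hom-types, identities, composition
   [comp g f] = g . f (first f, then g). *)
Record category := Category {
  Ob : Type;
  Hom : Ob -> Ob -> Type;
  idm : forall A, Hom A A;
  comp : forall A B C, Hom B C -> Hom A B -> Hom A C;
  comp_assoc : forall A B C D (h : Hom C D) (g : Hom B C) (f : Hom A B),
      comp h (comp g f) = comp (comp h g) f;
  comp_id_l : forall A B (f : Hom A B), comp (idm B) f = f;
  comp_id_r : forall A B (f : Hom A B), comp f (idm A) = f
}.
Arguments Hom : clear implicits.
Arguments idm {c} A.
Arguments comp {c A B C} _ _.

Definition finite_type (T : Type) : Prop :=
  exists s : list T, forall x : T, List.In x s.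

Definition arrow (C : category) (A B : Ob C) : Prop := inhabited (Hom C A B).

Definition is_aut (C : category) (A : Ob C) (a : Hom C A A) : Prop :=
  exists b : Hom C A A, comp a b = idm A /\ comp b a = idm A.

Definition cls (C : category) (A B : Ob C) (f : Hom C A B) : Hom C A B -> Prop :=
  fun g => exists a : Hom C A A, is_aut a /\ g = comp f a.

(* binom(B, A) = hom(A,B) / ~_A, as the set of equivalence classes *)
Definition binom (C : category) (B A : Ob C) : Type :=
  { P : Hom C A B -> Prop | exists f : Hom C A B, P = cls f }.

Definition class_of (C : category) (A B : Ob C) (f : Hom C A B) : binom B A :=
  exist _ (cls f) (ex_intro _ f erefl).

(* C --> (B)^A_k : k-colorings of binom(C,A) are maps binom(C,A) -> 'I_k
   (color class M_i = preimage of i) ; w . (f/~) = (w . f)/~ *)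
Definition erdos_rado (Cat : category) (C B A : Ob Cat) (k : nat) : Prop :=
  arrow A B /\ arrow B C /\
  forall chi : binom C A -> 'I_k,
    exists (i : 'I_k) (w : Hom Cat B C),
      forall f : Hom Cat A B, chi (class_of (comp w f)) = i.

Definition erdos_rado_hom (Cat : category) (C B A : Ob Cat) (k : nat) : Prop :=
  arrow A B /\ arrow B C /\
  forall chi : Hom Cat A C -> 'I_k,
    exists (i : 'I_k) (w : Hom Cat B C),
      forall f : Hom Cat A B, chi (comp w f) = i.

Definition ramsey_objects (Cat : category) : Prop :=
  forall (k : nat), 2 <= k -> forall A B : Ob Cat, arrow A B ->
    exists C : Ob Cat, erdos_rado C B A k.

Definition ramsey_morphisms (Cat : category) : Prop :=
  forall (k : nat), 2 <= k -> forall A B : Ob Cat, arrow A B ->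
    exists C : Ob Cat, erdos_rado_hom C B A k.

Section Prod.
Variables C1 C2 : category.

Definition prod_hom (A B : Ob C1 * Ob C2) : Type :=
  (Hom C1 A.1 B.1 * Hom C2 A.2 B.2)%type.

Definition prod_id (A : Ob C1 * Ob C2) : prod_hom A A := (idm A.1, idm A.2).

Definition prod_comp (A B C : Ob C1 * Ob C2)
  (g : prod_hom B C) (f : prod_hom A B) : prod_hom A C :=
  (comp g.1 f.1, comp g.2 f.2).

Lemma prod_comp_assoc A B C D (h : prod_hom C D) (g : prod_hom B C) (f : prod_hom A B) :
  prod_comp h (prod_comp g f) = prod_comp (prod_comp h g) f.
Proof. by rewrite /prod_comp /= !comp_assoc. Qed.

Lemma prod_comp_id_l A B (f : prod_hom A B) : prod_comp (prod_id B) f = f.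
Proof. by case: f => f1 f2; rewrite /prod_comp /= !comp_id_l. Qed.

Lemma prod_comp_id_r A B (f : prod_hom A B) : prod_comp f (prod_id A) = f.
Proof. by case: f => f1 f2; rewrite /prod_comp /= !comp_id_r. Qed.

Definition prod_cat : category :=
  @Category (Ob C1 * Ob C2)%type prod_hom prod_id prod_comp
    prod_comp_assoc prod_comp_id_l prod_comp_id_r.
End Prod.

From mathcomp Require Import all_boot.
From Stdlib Require Import ClassicalEpsilon FunctionalExtensionality.
From Stdlib Require Import PropExtensionality ProofIrrelevance.
Set Implicit Arguments. Unset Strict Implicit.

(* Take D2 Ramsey for A2 -> B2 with k colors.  A k-coloring of A1 x A2 -> D1 x D2
   assigns to each f1 : A1 -> D1 a k-coloring of the finitely many
   x : A2 -> D2; coding these colorings by K colors gives a K-coloring of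
   A1 -> D1.  With D1 Ramsey for A1 -> B1 and K colors we get w1 on which this
   induced coloring does not depend on f1, and the single remaining k-coloring
   of A2 -> D2 is made constant on w2 . (A2 -> B2); then (w1, w2) is
   monochromatic.  For objects, the classes of pairs depend only on the classes
   of their components. *)

Lemma finite_colorings_code (X : Type) (k : nat) : finite_type X ->
  exists K, 2 <= K /\
    exists code : (X -> 'I_k) -> 'I_K, forall g h, code g = code h -> g =1 h.
Proof.
move=> [s s_all].
set T := ((size s).-tuple 'I_k)%type.
exists (maxn 2 #|{: T}|); split; first exact: leq_maxl.
exists (fun g => widen_ord (leq_maxr 2 #|{: T}|)
                   (enum_rank (map_tuple g (in_tuple s)))).
move=> g h /(congr1 val) /= /val_inj /enum_rank_inj /(congr1 val) /= Egh x.
move: (s_all x); elim: s {T s_all} Egh => [|y s IHs] //= [Ey Egh] [<-|sx] //.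
exact: IHs.
Qed.

Section Automorphisms.
Variable C : category.

Lemma is_aut_id (A : Ob C) : is_aut (idm A).
Proof. by exists (idm A); rewrite comp_id_l. Qed.

Lemma is_aut_comp (A : Ob C) (a b : Hom C A A) :
  is_aut a -> is_aut b -> is_aut (comp a b).
Proof.
move=> [a' [aa' a'a]] [b' [bb' b'b]]; exists (comp b' a'); split.
- by rewrite -comp_assoc (comp_assoc b) bb' comp_id_l aa'.
- by rewrite -comp_assoc (comp_assoc a') a'a comp_id_l b'b.
Qed.

Lemma cls_comp_aut (A B : Ob C) (f : Hom C A B) (a : Hom C A A) :
  is_aut a -> cls (comp f a) = cls f.
Proof.
move=> aut_a; have [a' [aa' a'a]] := aut_a.
have aut_a' : is_aut a' by exists a.
apply: functional_extensionality => g; apply: propositional_extensionality.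
split=> -[b [aut_b ->]].
- by exists (comp a b); split; [exact: is_aut_comp | rewrite comp_assoc].
- exists (comp a' b); split; first exact: is_aut_comp.
  by rewrite comp_assoc -(comp_assoc f) aa' comp_id_r.
Qed.

Lemma class_of_comp_aut (A B : Ob C) (f : Hom C A B) (a : Hom C A A) :
  is_aut a -> class_of (comp f a) = class_of f.
Proof. by move=> aut_a; apply: subset_eq_compat; apply: cls_comp_aut. Qed.

Definition class_rep (A B : Ob C) (P : binom B A) : Hom C A B :=
  proj1_sig (constructive_indefinite_description _ (proj2_sig P)).

Lemma class_repP (A B : Ob C) (f : Hom C A B) :
  exists a, is_aut a /\ class_rep (class_of f) = comp f a.
Proof.
rewrite /class_rep; case: constructive_indefinite_description => r /= cls_r.
have : cls r r by exists (idm A); split; [exact: is_aut_id | rewrite comp_id_r].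
by rewrite -cls_r.
Qed.

End Automorphisms.

Section Product.
Variables C1 C2 : category.
Notation Cp := (prod_cat C1 C2).

Lemma prod_is_aut A1 A2 (a1 : Hom C1 A1 A1) (a2 : Hom C2 A2 A2) :
  is_aut a1 -> is_aut a2 -> @is_aut Cp (A1, A2) (a1, a2).
Proof.
move=> [b1 [ab1 ba1]] [b2 [ab2 ba2]]; exists (b1, b2).
by rewrite /= /prod_comp /prod_id /= ab1 ba1 ab2 ba2.
Qed.

Lemma prod_class_of_comp_aut A1 A2 B1 B2 (f1 : Hom C1 A1 B1) (f2 : Hom C2 A2 B2)
    (a1 : Hom C1 A1 A1) (a2 : Hom C2 A2 A2) :
  is_aut a1 -> is_aut a2 ->
  @class_of Cp (A1, A2) (B1, B2) (comp f1 a1, comp f2 a2) =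
  @class_of Cp (A1, A2) (B1, B2) (f1, f2).
Proof.
move=> aut_a1 aut_a2.
exact: (@class_of_comp_aut Cp (A1, A2) (B1, B2) (f1, f2) (a1, a2)
          (prod_is_aut aut_a1 aut_a2)).
Qed.

Lemma prod_class_of_rep_l A1 A2 B1 B2 (f1 : Hom C1 A1 B1) (f2 : Hom C2 A2 B2) :
  @class_of Cp (A1, A2) (B1, B2) (class_rep (class_of f1), f2) =
  @class_of Cp (A1, A2) (B1, B2) (f1, f2).
Proof.
have [a [aut_a ->]] := class_repP f1; rewrite -{1}(comp_id_r f2).
exact: prod_class_of_comp_aut aut_a (is_aut_id _).
Qed.

Lemma prod_class_of_rep_r A1 A2 B1 B2 (f1 : Hom C1 A1 B1) (f2 : Hom C2 A2 B2) :
  @class_of Cp (A1, A2) (B1, B2) (f1, class_rep (class_of f2)) =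
  @class_of Cp (A1, A2) (B1, B2) (f1, f2).
Proof.
have [a [aut_a ->]] := class_repP f2; rewrite -{1}(comp_id_r f1).
exact: prod_class_of_comp_aut (is_aut_id _) aut_a.
Qed.

Hypothesis fin2 : forall A B : Ob C2, finite_type (Hom C2 A B).

Lemma ramsey_objects_prod :
  ramsey_objects C1 -> ramsey_objects C2 -> ramsey_objects Cp.
Proof.
move=> R1 R2 k k_ge2 [A1 A2] [B1 B2] [[h1 h2]].
have [D2 [_ [[v2] ER2]]] := R2 k k_ge2 A2 B2 (inhabits h2).
have [K [K_ge2 [code codeP]]] := finite_colorings_code k (fin2 A2 D2).
have [D1 [_ [[v1] ER1]]] := R1 K K_ge2 A1 B1 (inhabits h1).
exists (D1, D2); split; first exact: inhabits (h1, h2).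
split; first exact: inhabits (v1, v2).
move=> chi; pose pcl f1 f2 := @class_of Cp (A1, A2) (D1, D2) (f1, f2).
have [i1 [w1 w1_mono]] := ER1 (fun P => code (fun x => chi (pcl (class_rep P) x))).
have [i [w2 w2_mono]] := ER2 (fun P => chi (pcl (comp w1 h1) (class_rep P))).
exists i, (w1, w2) => -[f1 f2].
have same_code := w1_mono f1; rewrite -(w1_mono h1) in same_code.
have := codeP _ _ same_code (comp w2 f2).
rewrite /pcl !prod_class_of_rep_l => ->.
by rewrite -(w2_mono f2) /pcl prod_class_of_rep_r.
Qed.

Lemma ramsey_morphisms_prod :
  ramsey_morphisms C1 -> ramsey_morphisms C2 -> ramsey_morphisms Cp.
Proof.
move=> R1 R2 k k_ge2 [A1 A2] [B1 B2] [[h1 h2]].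
have [D2 [_ [[v2] ER2]]] := R2 k k_ge2 A2 B2 (inhabits h2).
have [K [K_ge2 [code codeP]]] := finite_colorings_code k (fin2 A2 D2).
have [D1 [_ [[v1] ER1]]] := R1 K K_ge2 A1 B1 (inhabits h1).
exists (D1, D2); split; first exact: inhabits (h1, h2).
split; first exact: inhabits (v1, v2).
move=> chi; pose chip f1 f2 := chi ((f1, f2) : Hom Cp (A1, A2) (D1, D2)).
have [i1 [w1 w1_mono]] := ER1 (fun f1 => code (chip f1)).
have [i [w2 w2_mono]] := ER2 (chip (comp w1 h1)).
exists i, (w1, w2) => -[f1 f2].
have same_code := w1_mono f1; rewrite -(w1_mono h1) in same_code.
exact: etrans (codeP _ _ same_code (comp w2 f2)) (w2_mono f2).
Qed.

End Product.

Theorem theorem8p1 (C1 C2 : category)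
  (fin1 : forall A B : Ob C1, finite_type (Hom C1 A B))
  (fin2 : forall A B : Ob C2, finite_type (Hom C2 A B)) :
  (ramsey_objects C1 -> ramsey_objects C2 -> ramsey_objects (prod_cat C1 C2)) /\
  (ramsey_morphisms C1 -> ramsey_morphisms C2 -> ramsey_morphisms (prod_cat C1 C2)).
Proof.
(* Only the homsets of C2 need to be finite. *)
by split; [exact: ramsey_objects_prod | exact: ramsey_morphisms_prod].
Qed.
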